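(* Let $n\ge 1$ and let $G_0=\mathbb{Z}^n$ be the graph with vertex set $\mathbb{Z}^n$ and edges between $a,b\in\mathbb{Z}^n$ iff $\sum_{k=1}^n|a_k-b_k|=1$. Let $G_{l+1}$ be the clique graph of $G_l$ for $l\ge0$. Then $G_{l+2}\cong G_l$ for every $l\ge 0$; in particular $G_{2k}\cong \mathbb{Z}^n$ and $G_{2k+1}\cong G_1$ for all $k\ge 0$.
   Context: Graphs are simple and undirected. A clique is a maximal complete subgraph. The clique graph of a graph $H$ has as vertices the cliques of $H$, two distinct cliques being adjacent iff they share at least one vertex. $\cong$ denotes graph isomorphism (bijection on vertices preserving adjacency in both directions). *)

From mathcomp Require Import all_boot all_algebra.
Set Implicit Arguments. Unset Strict Implicit. Unset Printing Implicit Defensive.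

Record graph := Graph { vtx : Type; adj : vtx -> vtx -> Prop }.

Definition complete (G : graph) (S : vtx G -> Prop) : Prop :=
  forall x y, S x -> S y -> x <> y -> adj x y.

Definition is_clique (G : graph) (S : vtx G -> Prop) : Prop :=
  complete S /\
  forall T : vtx G -> Prop, complete T -> (forall x, S x -> T x) ->
    forall x, T x -> S x.

Definition clique_graph (G : graph) : graph :=
  @Graph {S : vtx G -> Prop | is_clique S}
    (fun A B => proj1_sig A <> proj1_sig B /\
                exists v, proj1_sig A v /\ proj1_sig B v).

Fixpoint iter_clique (l : nat) (G : graph) : graph :=
  match l with 0 => G | l'.+1 => clique_graph (iter_clique l' G) end.

Definition isomorphic (G H : graph) : Prop :=
  exists f : vtx G -> vtx H, bijective f /\
    forall x y, adj x y <-> adj (f x) (f y).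

Definition Zgrid (n : nat) : graph :=
  @Graph {ffun 'I_n -> int}
    (fun a b => (\sum_(k < n) absz (a k - b k)%R)%N = 1%N).

From mathcomp Require Import all_boot all_algebra.
From Stdlib Require Import Classical FunctionalExtensionality PropExtensionality ProofIrrelevance ClassicalEpsilon.
Set Implicit Arguments. Unset Strict Implicit. Unset Printing Implicit Defensive.

(* The grid Z^n is bipartite (by the parity of the coordinate sum), hence
   triangle-free, and every vertex has at least two neighbours.  In such a
   graph G the cliques are exactly the edges, so K(G) is the line graph of G,
   and a family of pairwise intersecting edges that do not all share a vertex
   would contain a triangle of G; hence the cliques of K(G) are exactly the
   stars "all edges through v".  Thus v |-> star v is an isomorphism
   G ~ K(K(G)), and since K respects isomorphism, K^(l+2)(G) ~ K^l(G). *)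

Lemma pred_ext (T : Type) (P Q : T -> Prop) : (forall x, P x <-> Q x) -> P = Q.
Proof.
by move=> PQ; apply: functional_extensionality => x; apply: propositional_extensionality.
Qed.

Lemma sig_ext (T : Type) (P : T -> Prop) (A B : {x | P x}) :
  proj1_sig A = proj1_sig B -> A = B.
Proof.
case: A B => [a Pa] [b Pb] /= eab; subst b.
by rewrite (proof_irrelevance _ Pa Pb).
Qed.

Lemma inj_surj_bijective (A B : Type) (f : A -> B) :
  injective f -> (forall b, exists a, f a = b) -> bijective f.
Proof.
move=> f_inj f_surj.
pose g b := proj1_sig (constructive_indefinite_description _ (f_surj b)).
have gK : cancel g f.
  by move=> b; rewrite /g; case: constructive_indefinite_description.
by exists g => // a; apply: f_inj; rewrite gK.
Qed.

Lemma isomorphic_refl (G : graph) : isomorphic G G.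
Proof. by exists id; split => //; exists id. Qed.

Lemma isomorphic_sym (G H : graph) : isomorphic G H -> isomorphic H G.
Proof.
move=> [f [[g fK gK] f_adj]]; exists g; split; first by exists f.
by move=> x y; rewrite f_adj !gK.
Qed.

Lemma isomorphic_trans (G H K : graph) :
  isomorphic G H -> isomorphic H K -> isomorphic G K.
Proof.
move=> [f [f_bij f_adj]] [h [h_bij h_adj]]; exists (h \o f); split.
  exact: bij_comp.
by move=> x y; rewrite f_adj h_adj.
Qed.

Lemma clique_inhabited (G : graph) (S : vtx G -> Prop) :
  inhabited (vtx G) -> is_clique S -> exists x, S x.
Proof.
move=> [v0] [_ maxS]; apply: NNPP => noS.
have Sv0 : S v0.
  apply: (maxS (eq^~ v0)) => //; first by move=> x y -> -> [].
  by move=> x Sx; case: noS; exists x.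
by apply: noS; exists v0.
Qed.

Lemma is_clique_comp (G H : graph) (f : vtx G -> vtx H) (g : vtx H -> vtx G) :
  cancel f g -> cancel g f -> (forall x y, adj x y <-> adj (f x) (f y)) ->
  forall S : vtx H -> Prop, is_clique S -> is_clique (S \o f).
Proof.
move=> fK gK f_adj S [cS maxS]; split.
  move=> x y Sx Sy xy; apply/f_adj.
  by apply: cS => // /(can_inj fK).
move=> T cT ST x Tx; apply: (maxS (T \o g)); last by rewrite /= fK.
- move=> y1 y2 Ty1 Ty2 y12; rewrite -[y1]gK -[y2]gK -f_adj.
  by apply: cT => // /(can_inj gK).
- by move=> y Sy; apply: ST; rewrite /= gK.
Qed.

Lemma isomorphic_clique_graph (G H : graph) :
  isomorphic G H -> isomorphic (clique_graph G) (clique_graph H).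
Proof.
move=> [f [[g fK gK] f_adj]].
have g_adj x y : adj x y <-> adj (g x) (g y) by rewrite f_adj !gK.
pose F (C : vtx (clique_graph G)) : vtx (clique_graph H) :=
  exist _ _ (is_clique_comp gK fK g_adj (proj2_sig C)).
pose F' (C : vtx (clique_graph H)) : vtx (clique_graph G) :=
  exist _ _ (is_clique_comp fK gK f_adj (proj2_sig C)).
exists F; split.
  by exists F' => C; apply: sig_ext; apply: functional_extensionality => x /=;
    rewrite ?fK ?gK.
move=> C D; split.
- move=> [CD [v [Cv Dv]]]; split; last by exists (f v); rewrite /= !fK.
  move=> eCD; apply: CD; apply: functional_extensionality => x.
  by move: eCD => /(congr1 (fun P => P (f x))) /=; rewrite !fK.
- move=> [CD [y [Cy Dy]]]; split; last by exists (g y).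
  by move=> eCD; apply: CD; rewrite /= eCD.
Qed.

Section CliqueGraphOfTriangleFree.

Variable G : graph.
Hypothesis adj_sym : forall x y : vtx G, adj x y -> adj y x.
Hypothesis adj_irrefl : forall x : vtx G, ~ adj x x.
Hypothesis triangle_free : forall x y z : vtx G, adj x y -> adj y z -> adj x z -> False.
Hypothesis two_neighbours : forall v : vtx G, exists a b, a <> b /\ adj v a /\ adj v b.
Hypothesis vtx_inhabited : inhabited (vtx G).

Definition doubleton (u w : vtx G) : vtx G -> Prop := fun x => x = u \/ x = w.

Lemma doubleton_complete u w : adj u w -> complete (doubleton u w).
Proof.
move=> uw x y [->|->] [->|->] xy //; by [apply: adj_sym | case: (xy erefl)].
Qed.

Lemma doubleton_clique u w : adj u w -> is_clique (doubleton u w).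
Proof.
move=> uw; split; first exact: doubleton_complete.
move=> T cT sub x Tx; apply: NNPP => /not_or_and [xu xw].
have Tu : T u by apply: sub; left.
have Tw : T w by apply: sub; right.
exact: triangle_free uw (cT _ _ Tw Tx (nesym xw)) (cT _ _ Tu Tx (nesym xu)).
Qed.

Lemma clique_doubleton C : is_clique C -> exists u w, adj u w /\ C = doubleton u w.
Proof.
move=> cliqueC; have [u Cu] := clique_inhabited vtx_inhabited cliqueC.
case: cliqueC => cC maxC.
have [w [Cw wu]] : exists w, C w /\ w <> u.
  apply: NNPP => only_u.
  have [a [_ [_ [ua _]]]] := two_neighbours u.
  apply: (only_u); exists a; split; last by move=> au; rewrite au in ua; apply: adj_irrefl ua.
  apply: (maxC (doubleton u a)); [exact: doubleton_complete | | by right].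
  by move=> x Cx; left; apply: NNPP => xu; apply: only_u; exists x.
have uw : adj u w by apply: cC => //; apply: nesym.
exists u, w; split => //; apply: pred_ext => x; split; last by case=> ->.
move=> Cx; apply: NNPP => /not_or_and [xu xw].
exact: triangle_free uw (cC _ _ Cw Cx (nesym xw)) (cC _ _ Cu Cx (nesym xu)).
Qed.

Definition edge_vtx u w (uw : adj u w) : vtx (clique_graph G) :=
  exist _ _ (doubleton_clique uw).

Definition star (v : vtx G) : vtx (clique_graph G) -> Prop := fun C => proj1_sig C v.

Lemma star_clique v : is_clique (star v).
Proof.
split.
  move=> C D Cv Dv CD; split; last by exists v.
  by move=> eCD; apply: CD; apply: sig_ext.
move=> T cT sub X TX; apply: NNPP => Xv.
have [a [b [ab [va vb]]]] := two_neighbours v.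
(* X meets every edge at v, but not in v, so it contains both a and b. *)
have X_end u (vu : adj v u) : proj1_sig X u.
  have TE : T (edge_vtx vu) by apply: sub; left.
  have XE : X <> edge_vtx vu by move=> eX; apply: Xv; rewrite /star eX; left.
  have [_ [y [Xy [eyv|eyu]]]] := cT _ _ TX TE XE.
    by case: Xv; rewrite -eyv.
  by rewrite -eyu.
exact: triangle_free va (proj1 (proj2_sig X) a b (X_end a va) (X_end b vb) ab) vb.
Qed.

Lemma star_inj : injective star.
Proof.
move=> v w evw; have [a [b [ab [va vb]]]] := two_neighbours v.
have : star w (edge_vtx va) by rewrite -evw; left.
have : star w (edge_vtx vb) by rewrite -evw; left.
by case=> [->|wb] // [->|wa] //; case: ab; rewrite -wa -wb.
Qed.

Lemma complete_common_vertex (Q : vtx (clique_graph G) -> Prop) C :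
  complete Q -> Q C -> exists v, forall D, Q D -> proj1_sig D v.
Proof.
move=> cQ QC; have [u [w [uw eC]]] := clique_doubleton (proj2_sig C).
have meets_C D : Q D -> proj1_sig D u \/ proj1_sig D w.
  move=> QD; case: (classic (D = C)) => [->|DC]; first by rewrite eC; left; left.
  have [_ [y [Dy Cy]]] := cQ _ _ QD QC DC.
  by rewrite eC in Cy; case: Cy => <-; [left | right].
case: (classic (forall D, Q D -> proj1_sig D u)) => [all_u|not_all_u].
  by exists u.
(* If D misses u and E misses w, then w in D, u in E and D, E meet in z: uwz is a triangle. *)
exists w => E QE; apply: NNPP => Ew; apply: not_all_u => D QD; apply: NNPP => Du.
have Dw : proj1_sig D w by case: (meets_C D QD).
have Eu : proj1_sig E u by case: (meets_C E QE).
have DE : D <> E by move=> eDE; apply: Ew; rewrite -eDE.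
have [_ [z [Dz Ez]]] := cQ _ _ QD QE DE.
apply: (@triangle_free u w z uw).
- by apply: (proj1 (proj2_sig D)) => // wz; apply: Ew; rewrite wz.
- by apply: (proj1 (proj2_sig E)) => // uz; apply: Du; rewrite uz.
Qed.

Lemma clique_star Q : is_clique Q -> exists v, Q = star v.
Proof.
move=> cliqueQ.
have inh : inhabited (vtx (clique_graph G)).
  case: vtx_inhabited => v0; have [a [_ [_ [v0a _]]]] := two_neighbours v0.
  exact: inhabits (edge_vtx v0a).
have [C QC] := clique_inhabited inh cliqueQ.
case: cliqueQ => cQ maxQ; have [v Qv] := complete_common_vertex cQ QC.
exists v; apply: pred_ext => D; split; first exact: Qv.
exact: maxQ (star v) (proj1 (star_clique v)) Qv D.
Qed.

Theorem isomorphic_clique_graph2 : isomorphic G (clique_graph (clique_graph G)).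
Proof.
pose f v : vtx (clique_graph (clique_graph G)) := exist _ (star v) (star_clique v).
exists f; split.
  apply: inj_surj_bijective.
    by move=> v w /(congr1 (@proj1_sig _ _)) /star_inj.
  move=> Q; have [v eQ] := clique_star (proj2_sig Q).
  by exists v; apply: sig_ext; rewrite eQ.
move=> v w; split.
- move=> vw; split; last by exists (edge_vtx vw); split; [left | right].
  by move=> /star_inj evw; rewrite evw in vw; apply: adj_irrefl vw.
- move=> [vw [C [Cv Cw]]]; apply: (proj1 (proj2_sig C)) => // evw.
  by apply: vw; rewrite evw.
Qed.

Lemma iter_clique_period2 l : isomorphic (iter_clique l.+2 G) (iter_clique l G).
Proof.
elim: l => [|l IH]; first exact: isomorphic_sym isomorphic_clique_graph2.
exact: isomorphic_clique_graph IH.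
Qed.

Lemma iter_clique_double_add k l :
  isomorphic (iter_clique (2 * k + l) G) (iter_clique l G).
Proof.
elim: k => [|k IH]; first exact: isomorphic_refl.
by rewrite mulnS -addnA; apply: isomorphic_trans (iter_clique_period2 _) IH.
Qed.

End CliqueGraphOfTriangleFree.

Section Grid.
Import GRing.Theory.
Local Open Scope ring_scope.

Variable n : nat.

Lemma intr_F2_absz (z : int) : z%:~R = (absz z)%:R :> 'F_2.
Proof.
case: z => m //; rewrite NegzE mulrNz abszN.
exact: GRing.oppr_pchar2 (pchar_Fp (isT : prime 2)) _.
Qed.

Definition parity (a : {ffun 'I_n -> int}) : 'F_2 := \sum_(k < n) (a k)%:~R.

Lemma Zgrid_adj_parity (a b : vtx (Zgrid n)) : adj a b -> parity a = parity b + 1.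
Proof.
move=> /= ab; apply/eqP; rewrite -subr_eq0 opprD addrA /parity -sumrB.
rewrite (eq_bigr (fun k => (absz (a k - b k))%:R)); last first.
  by move=> k _; rewrite -intr_F2_absz intrB.
by rewrite -natr_sum ab subrr.
Qed.

Lemma Zgrid_adj_sym (a b : vtx (Zgrid n)) : adj a b -> adj b a.
Proof. by move=> /= <-; apply: eq_bigr => k _; rewrite -abszN opprB. Qed.

Lemma Zgrid_adj_irrefl (a : vtx (Zgrid n)) : ~ adj a a.
Proof. by rewrite /= big1 // => k _; rewrite subrr. Qed.

Lemma Zgrid_triangle_free (a b c : vtx (Zgrid n)) : adj a b -> adj b c -> adj a c -> False.
Proof.
move=> /Zgrid_adj_parity ab /Zgrid_adj_parity bc /Zgrid_adj_parity ac.
have : 1 + 1 = 0 :> 'F_2 by apply/eqP.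
by move: ac; rewrite ab bc -addrA => /addrI ->.
Qed.

Definition grid_step (a : {ffun 'I_n -> int}) (i : 'I_n) (e : int) : {ffun 'I_n -> int} :=
  [ffun k => a k + (k == i)%:R * e].

Lemma Zgrid_adj_step (a : vtx (Zgrid n)) i e : absz e = 1%N -> adj a (grid_step a i e).
Proof.
move=> e1 /=; rewrite (bigD1 i) //= big1 => [|k /negbTE ki].
  by rewrite ffunE eqxx mul1r opprD addrA subrr add0r abszN e1.
by rewrite ffunE ki mul0r addr0 subrr.
Qed.

Lemma Zgrid_two_neighbours : (1 <= n)%N ->
  forall a : vtx (Zgrid n), exists b c, b <> c /\ adj a b /\ adj a c.
Proof.
move=> n_gt0 a; pose i : 'I_n := Ordinal n_gt0.
exists (grid_step a i 1), (grid_step a i (-1)).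
split; last by split; apply: Zgrid_adj_step.
by move=> /(congr1 (fun b : {ffun 'I_n -> int} => b i)); rewrite !ffunE eqxx !mul1r => /addrI.
Qed.

End Grid.

Theorem mainTheorem7 (n : nat) (hn : (1 <= n)%N) :
  (forall l : nat, isomorphic (iter_clique l.+2 (Zgrid n)) (iter_clique l (Zgrid n))) /\
  (forall k : nat, isomorphic (iter_clique (2 * k) (Zgrid n)) (Zgrid n)) /\
  (forall k : nat, isomorphic (iter_clique (2 * k).+1 (Zgrid n)) (iter_clique 1 (Zgrid n))).
Proof.
have inh : inhabited (vtx (Zgrid n)) by exact: inhabits [ffun => 0%R].
have period := iter_clique_double_add (@Zgrid_adj_sym n) (@Zgrid_adj_irrefl n)
  (@Zgrid_triangle_free n) (Zgrid_two_neighbours hn) inh.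
split; first exact: period 1.
split => k.
- by rewrite -[2 * k]addn0; apply: period.
- by rewrite -[(2 * k).+1]addn1; apply: period.
Qed.
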